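(* Let $K$ be a field, $X$ a finite connected poset with $n$ elements, and $m$ a positive integer. Then $$J_m=\mathrm{span}_K\{e_{xy}: l(\lfloor x,y\rfloor)\ge m\}=J(I(X,K))^m.$$ In particular $J_n=J(I(X,K))^n=\{0\}$, and $J_m$ is an (associative) ideal, hence a Lie ideal, of $I(X,K)$.
   Context: $I(X,K)$ is the incidence algebra: functions $f:X\times X\to K$ with $f(x,y)=0$ unless $x\le y$, product $(fg)(x,y)=\sum_{x\le t\le y}f(x,t)g(t,y)$; for $x\le y$, $e_{xy}$ is the function equal to $1$ at $(x,y)$ and $0$ elsewhere. $J(I(X,K))=\{f: f(x,x)=0\ \forall x\}$ is its Jacobson radical. $[f,g]=fg-gf$. $J_1=\mathrm{span}_K\{[f,g]:f,g\in I(X,K)\}$ and $J_m=\mathrm{span}_K\{[f,g]: f\in J_1,\ g\in J_{m-1}\}$ for $m\ge2$. $\lfloor x,y\rfloor=\{z:x\le z\le y\}$ and $l(\lfloor x,y\rfloor)$ is the maximum length of a chain in it (length of a chain = cardinality minus one). Connected means any two elements are joined by a sequence in which consecutive elements are in a covering relation. *)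

From HB Require Import structures.
From mathcomp Require Import all_boot all_order all_algebra.
Set Implicit Arguments. Unset Strict Implicit. Unset Printing Implicit Defensive.
Import Order.TTheory GRing.Theory.
Local Open Scope ring_scope.
Local Open Scope order_scope.

Section Incidence.
Variables (d : Order.disp_t) (X : finPOrderType d) (K : fieldType).

Local Notation fn := {ffun X * X -> K}.

Definition inI (f : fn) : Prop := forall x y : X, ~~ (x <= y) -> f (x, y) = 0.

Definition imul (f g : fn) : fn :=
  [ffun p : X * X => \sum_(t : X | (p.1 <= t) && (t <= p.2)) f (p.1, t) * g (t, p.2)].

Definition icomm (f g : fn) : fn := imul f g - imul g f.

Definition eunit (x y : X) : fn := [ffun p : X * X => if p == (x, y) then 1 else 0].

Definition inspan (S : fn -> Prop) (v : fn) : Prop :=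
  exists (k : nat) (c : 'I_k -> K) (s : 'I_k -> fn),
    (forall i, S (s i)) /\ forall p : X * X, v p = \sum_(i < k) c i * s i p.

Definition Jrad (f : fn) : Prop := inI f /\ forall x : X, f (x, x) = 0.

Definition J1 : fn -> Prop :=
  inspan (fun h => exists f g, inI f /\ inI g /\ h = icomm f g).

(* J_m (m >= 1); the value at m = 0 is irrelevant *)
Fixpoint Jlie (m : nat) : fn -> Prop :=
  match m with
  | 0 => fun _ => False
  | 1 => J1
  | m'.+1 => inspan (fun h => exists f g, J1 f /\ Jlie m' g /\ h = icomm f g)
  end.

Fixpoint Jpow (m : nat) : fn -> Prop :=
  match m with
  | 0 => fun _ => False
  | 1 => Jrad
  | m'.+1 => inspan (fun h => exists f g, Jrad f /\ Jpow m' g /\ h = imul f g)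
  end.

Definition is_chain (A : {set X}) : bool :=
  [forall a in A, forall b in A, (a <= b) || (b <= a)].

Definition interval_set (x y : X) : {set X} := [set z | (x <= z) && (z <= y)].

Definition ilen (x y : X) : nat :=
  \max_(A : {set X} | is_chain A && (A \subset interval_set x y)) #|A|.-1.

Definition Espan (m : nat) : fn -> Prop :=
  inspan (fun h => exists x y : X, [/\ x <= y, (m <= ilen x y)%N & h = eunit x y]).

Definition covers (x y : X) : bool := (x < y) && [forall z : X, ~~ ((x < z) && (z < y))].

Definition connected_poset : Prop :=
  forall x y : X, exists s : seq X,
    path (fun a b => covers a b || covers b a) x s /\ last x s = y.

End Incidence.

(* Both J_m and J(I(X,K))^m are the functions supported on the pairs x <= y
   with l([x,y]) >= m.  Interval length is superadditive,
   l([x,y]) + l([y,z]) <= l([x,z]) (concatenate maximal chains through y), so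
   products of functions supported on lengths >= 1 and >= m are supported on
   lengths >= m + 1; commutators vanish on the diagonal.  Conversely, if
   l([x,z]) >= m + 1, dropping x from a maximal chain of [x,z] and taking the
   least remaining element y gives x < y <= z with l([y,z]) >= m, and then
   e_xz = e_xy e_yz = [e_xy, e_yz].  As l([x,y]) < |X|, J_|X| = 0. *)

From HB Require Import structures.
From mathcomp Require Import all_boot all_order all_algebra.
From mathcomp Require Import zify.
Set Implicit Arguments.
Unset Strict Implicit.
Unset Printing Implicit Defensive.

Import Order.TTheory GRing.Theory.
Local Open Scope ring_scope.

Section IntervalLength.
Variables (d : Order.disp_t) (X : finPOrderType d).
Implicit Types (x y z a b : X) (A B : {set X}).
Local Open Scope order_scope.

Lemma is_chainP A : reflect {in A &, forall a b, (a <= b) || (b <= a)} (is_chain A).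
Proof.
apply: (iffP forall_inP) => [cA a b aA bA | cA a aA].
  by move/forall_inP: (cA a aA); apply.
by apply/forall_inP => b; apply: cA.
Qed.

Lemma is_chainU1 a A : is_chain A -> {in A, forall b, (a <= b) || (b <= a)} ->
  is_chain (a |: A).
Proof.
move=> /is_chainP cA aA; apply/is_chainP => b c.
rewrite !in_setU1 => /predU1P[->|bA] /predU1P[->|cA'].
- by rewrite lexx.
- exact: aA.
- by rewrite orbC; exact: aA.
- exact: cA.
Qed.

Lemma is_chainU A B y : is_chain A -> is_chain B ->
  {in A, forall a, a <= y} -> {in B, forall b, y <= b} -> is_chain (A :|: B).
Proof.
move=> /is_chainP cA /is_chainP cB Ay yB; apply/is_chainP => a b.
rewrite !inE => /orP[aA|aB] /orP[bA|bB].
- exact: cA.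
- by rewrite (le_trans (Ay a aA) (yB b bB)).
- by rewrite (le_trans (Ay b bA) (yB a aB)) orbT.
- exact: cB.
Qed.

Lemma is_chainS A B : A \subset B -> is_chain B -> is_chain A.
Proof.
move=> /subsetP sAB /is_chainP cB.
by apply/is_chainP => a b /sAB aB /sAB; exact: cB.
Qed.

Lemma chain_min A a0 : is_chain A -> a0 \in A ->
  exists2 a, a \in A & {in A, forall b, a <= b}.
Proof.
move=> /is_chainP cA a0A.
have [a aA amax] := arg_maxnP (fun a => #|[set b in A | a <= b]|) a0A.
exists a => // b bA; apply/contraT => nab.
have ba : b <= a by move: (cA _ _ aA bA); rewrite (negbTE nab).
have : [set c in A | a <= c] \proper [set c in A | b <= c].
  apply/properP; split; last by exists b; rewrite !inE ?bA ?lexx.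
  by apply/subsetP => c; rewrite !inE => /andP[-> /(le_trans ba)].
by move/proper_card/(leq_ltn_trans (amax b bA)); rewrite ltnn.
Qed.

Lemma leq_ilen x y A : is_chain A -> A \subset interval_set x y ->
  (#|A|.-1 <= ilen x y)%N.
Proof.
move=> cA sA.
exact: (@leq_bigmax_cond _ (fun B => is_chain B && (B \subset interval_set x y))
  (fun B => #|B|.-1) A (introT andP (conj cA sA))).
Qed.

Lemma ilen_witness x y : exists2 A,
  is_chain A && (A \subset interval_set x y) & ilen x y = #|A|.-1.
Proof.
pose P := [pred B : {set X} | is_chain B && (B \subset interval_set x y)].
have P0 : (0 < #|P|)%N.
  apply/card_gt0P; exists set0; rewrite inE sub0set andbT.
  by apply/is_chainP => a; rewrite in_set0.
by have [A PA lenA] := eq_bigmax_cond (fun B : {set X} => #|B|.-1) P0; exists A.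
Qed.

Lemma ilen_witness_ends x y : x <= y -> exists A,
  [/\ is_chain A, A \subset interval_set x y, x \in A, y \in A & ilen x y = #|A|.-1].
Proof.
move=> xy; have [A /andP[cA sA] lenA] := ilen_witness x y.
have inA a : a \in A -> x <= a <= y by move/(subsetP sA); rewrite inE.
pose B := x |: (y |: A).
have cB : is_chain B.
  apply: is_chainU1; first by apply: is_chainU1 => // a /inA/andP[_ ->]; rewrite orbT.
  by move=> a /setU1P[-> | /inA/andP[-> _]]; rewrite ?xy.
have sB : B \subset interval_set x y.
  by apply/subsetP => a; rewrite !inE => /predU1P[-> | /predU1P[-> | /inA]];
    rewrite ?lexx ?xy.
have sAB : A \subset B by apply/subsetP => a aA; rewrite !in_setU1 aA !orbT.
exists B; split; rewrite ?in_setU1 ?eqxx ?orbT //.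
by have := leq_ilen cB sB; have := subset_leq_card sAB; lia.
Qed.

Lemma ilen_xx x : ilen x x = 0%N.
Proof.
have [A [_ sA _ _ ->]] := ilen_witness_ends (lexx x).
have : A \subset [set x].
  by apply/subsetP => a /(subsetP sA); rewrite !inE -eq_le eq_sym.
by move/subset_leq_card; rewrite cards1; lia.
Qed.

Lemma ilen_gt0 x y : x <= y -> (0 < ilen x y)%N = (x < y).
Proof.
move=> xy; have [<-|nxy] := eqVneq x y; first by rewrite ilen_xx ltxx.
rewrite lt_neqAle nxy xy; apply: (leq_trans _ (leq_ilen (A := [set x; y]) _ _)).
- by rewrite cards2 nxy.
- apply: is_chainU1; first by apply/is_chainP => a b /set1P-> /set1P->; rewrite lexx.
  by move=> a /set1P->; rewrite xy.
- by apply/subsetP => a; rewrite !inE => /orP[]/eqP->; rewrite ?lexx ?xy.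
Qed.

Lemma ilen_superadd x y z : x <= y -> y <= z -> (ilen x y + ilen y z <= ilen x z)%N.
Proof.
move=> xy yz.
have [A [cA sA _ yA ->]] := ilen_witness_ends xy.
have [B [cB sB yB _ ->]] := ilen_witness_ends yz.
have inA a : a \in A -> x <= a <= y by move/(subsetP sA); rewrite inE.
have inB b : b \in B -> y <= b <= z by move/(subsetP sB); rewrite inE.
have AB : A :&: B = [set y].
  apply/setP => a; rewrite !inE; apply/andP/eqP => [[aA aB] | ->] //.
  have /andP[_ ay] := inA a aA; have /andP[ya _] := inB a aB.
  by apply/le_anti; rewrite ay ya.
have cAB : is_chain (A :|: B).
  by apply: (is_chainU (y := y) cA cB) => [a /inA/andP[_ ->] | b /inB/andP[-> _]].
have sAB : A :|: B \subset interval_set x z.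
  apply/subsetP => a; rewrite !inE => /orP[/inA/andP[xa ay] | /inB/andP[ya az]].
  - by rewrite xa (le_trans ay yz).
  - by rewrite az (le_trans xy ya).
have := leq_ilen cAB sAB; have := cardsUI A B; rewrite AB cards1.
have : (0 < #|A|)%N by apply/card_gt0P; exists y.
have : (0 < #|B|)%N by apply/card_gt0P; exists y.
lia.
Qed.

Lemma ilen_lt_card x y : (ilen x y < #|X|)%N.
Proof.
have [A _ ->] := ilen_witness x y.
have X0 : (0 < #|X|)%N by apply/card_gt0P; exists x.
by case: #|A| (max_card A).
Qed.

Lemma ilen_split m x z : (m < ilen x z)%N ->
  exists y, [/\ x < y, y <= z & (m <= ilen y z)%N].
Proof.
move=> lt_m; have [A /andP[cA sA] lenA] := ilen_witness x z.
have cA' : is_chain (A :\ x) := is_chainS (subsetDl A _) cA.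
have lt_m' : (m < #|A :\ x|)%N.
  by move: lt_m; rewrite lenA (cardsD1 x A); case: (x \in A) => /=; lia.
have [a0 a0A'] : exists a0, a0 \in A :\ x by apply/card_gt0P; lia.
have [y /setD1P[yx yA] ymin] := chain_min cA' a0A'.
have inA a : a \in A -> x <= a <= z by move/(subsetP sA); rewrite inE.
have /andP[xy yz] := inA y yA.
exists y; split => //; first by rewrite lt_neqAle eq_sym yx.
have sA' : A :\ x \subset interval_set y z.
  apply/subsetP => a aA'; rewrite inE ymin //=.
  by case/setD1P: aA' => _ /inA/andP[].
by have := leq_ilen cA' sA'; lia.
Qed.

End IntervalLength.

Section IncidenceSupport.
Variables (d : Order.disp_t) (X : finPOrderType d) (K : fieldType).
Local Notation fn := {ffun X * X -> K}.
Local Notation e := (eunit K).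
Implicit Types (f g h v : fn) (x y z t : X) (m n : nat).
Local Open Scope order_scope.

Definition long_pairs m : {pred X * X} :=
  [pred p | (p.1 <= p.2) && (m <= ilen p.1 p.2)%N].

Lemma long_pairs0 x y : ((x, y) \in long_pairs 0) = (x <= y).
Proof. by rewrite inE leq0n andbT. Qed.

Lemma long_pairs1 x y : ((x, y) \in long_pairs 1) = (x < y).
Proof.
rewrite inE /=; have [xy|nxy] := boolP (x <= y); first exact: ilen_gt0.
by apply/esym/negbTE; apply: contra nxy => /ltW.
Qed.

Lemma long_pairs_trans m n x y z :
  (x, y) \in long_pairs m -> (y, z) \in long_pairs n -> (x, z) \in long_pairs (m + n).
Proof.
rewrite !inE /= => /andP[xy my] /andP[yz nz].
by rewrite (le_trans xy yz) (leq_trans (leq_add my nz) (ilen_superadd xy yz)).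
Qed.

Lemma long_pairs_card : long_pairs #|X| =i pred0.
Proof. by move=> [x y]; rewrite !inE /= leqNgt ilen_lt_card andbF. Qed.

Lemma supportN0 (P : {pred X * X}) f p : support f \subset P -> p \notin P -> f p = 0.
Proof. by move=> /subsetP sfP; apply: contraNeq => /sfP. Qed.

Lemma support_sub (P : {pred X * X}) f g :
  support f \subset P -> support g \subset P -> support (f - g) \subset P.
Proof.
move=> sf sg; apply/subsetP => p; rewrite supportE !ffunE; apply: contraR => pP.
by rewrite (supportN0 sf pP) (supportN0 sg pP) subrr.
Qed.

Lemma inspan_support (S : fn -> Prop) (P : {pred X * X}) v :
  (forall h, S h -> support h \subset P) -> inspan S v -> support v \subset P.
Proof.
move=> SP [k [c [s [Ss vE]]]]; apply/subsetP => p; rewrite supportE vE.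
apply: contraR => pP; rewrite big1 // => i _.
by rewrite (supportN0 (SP _ (Ss i)) pP) mulr0.
Qed.

Lemma eunitE x y p : e x y p = if p == (x, y) then 1 else 0.
Proof. by rewrite ffunE. Qed.

Lemma support_inspan (S : fn -> Prop) (P : {pred X * X}) v :
  (forall x y, (x, y) \in P -> S (e x y)) -> support v \subset P -> inspan S v.
Proof.
move=> SP sv.
exists #|P|, (fun i => v (enum_val i)), (fun i => e (enum_val i).1 (enum_val i).2).
split=> [i | p]; first by apply: SP; rewrite -surjective_pairing enum_valP.
rewrite -(big_enum_val (fun q => v q * e q.1 q.2 p)) /=.
have [pP | pNP] := boolP (p \in P).
  rewrite (bigD1 p) //= eunitE -surjective_pairing eqxx mulr1 big1 ?addr0 //.
  move=> q /andP[_ nqp].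
  by rewrite eunitE -surjective_pairing eq_sym (negbTE nqp) mulr0.
rewrite (supportN0 sv pNP) big1 // => q qP; rewrite eunitE -surjective_pairing.
by case: eqP => [pq | _]; [rewrite pq qP in pNP | rewrite mulr0].
Qed.

Lemma support_eunit (P : {pred X * X}) x y : (x, y) \in P -> support (e x y) \subset P.
Proof.
move=> xyP; apply/subsetP => p; rewrite supportE eunitE.
by case: (p =P (x, y)) => [-> | _] //; rewrite eqxx.
Qed.

Lemma inI_eunit x y : x <= y -> inI (e x y).
Proof.
move=> xy a b; apply: contraNeq; rewrite eunitE.
by case: ((a, b) =P (x, y)) => [[-> ->] | _] //; rewrite eqxx.
Qed.

Lemma imulE f g x z : imul f g (x, z) = \sum_(t | x <= t <= z) f (x, t) * g (t, z).
Proof. by rewrite ffunE. Qed.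

Lemma imul_eunit x y z : x <= y -> y <= z -> imul (e x y) (e y z) = e x z.
Proof.
move=> xy yz; apply/ffunP => -[a b]; rewrite imulE eunitE.
case: eqP => [[-> ->] | ne].
  rewrite (bigD1 y) /= ?xy ?yz // !eunitE !eqxx mul1r big1 ?addr0 //.
  move=> t /andP[_ nty].
  by rewrite !eunitE xpair_eqE (negbTE nty) andbF mul0r.
apply: big1 => t _; rewrite !eunitE !xpair_eqE.
case: (a =P x) => [ax | _]; last by rewrite mul0r.
by case: (b =P z) => [bz | _]; [case: ne; rewrite ax bz | rewrite andbF mulr0].
Qed.

Lemma imul_eunit0 x y y' z : y != y' -> imul (e x y) (e y' z) = 0.
Proof.
move=> yy'; apply/ffunP => -[a b]; rewrite imulE ffunE; apply: big1 => t _.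
rewrite !eunitE !xpair_eqE.
have [-> | _] := eqVneq t y; first by rewrite (negbTE yy') mulr0.
by rewrite andbF mul0r.
Qed.

Lemma icomm_eunit x y z : x <= y -> y <= z -> x != z -> icomm (e x y) (e y z) = e x z.
Proof. by move=> xy yz xz; rewrite /icomm imul_eunit // imul_eunit0 ?subr0 // eq_sym. Qed.

Lemma support_imul m n f g : support f \subset long_pairs m ->
  support g \subset long_pairs n -> support (imul f g) \subset long_pairs (m + n).
Proof.
move=> sf sg; apply/subsetP => -[x z]; rewrite supportE imulE; apply: contraR => xz.
rewrite big1 // => t _.
have [-> | /(subsetP sf (x, t)) xt] := eqVneq (f (x, t)) 0; first by rewrite mul0r.
have [-> | /(subsetP sg (t, z)) tz] := eqVneq (g (t, z)) 0; first by rewrite mulr0.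
by case/negP: xz; exact: long_pairs_trans xt tz.
Qed.

Lemma support_icomm f g : support (icomm f g) \subset long_pairs 1.
Proof.
apply/subsetP => -[x z]; rewrite long_pairs1 supportE /icomm !ffunE /=.
apply: contraR; rewrite lt_def negb_and negbK => /orP[/eqP-> | xz].
  have diag : (fun t => x <= t <= x) =1 pred1 x by move=> t /=; rewrite -eq_le eq_sym.
  by rewrite !(big_pred1 x diag) mulrC addrN.
by rewrite !big1 ?oppr0 ?addr0 // => t /andP[xt tz]; case/negP: xz; exact: le_trans tz.
Qed.

Lemma inI_support f : inI f -> support f \subset long_pairs 0.
Proof.
move=> fI; apply/subsetP => -[x y]; rewrite supportE long_pairs0.
by apply: contraR => /fI->.
Qed.

Lemma support_long_card f : support f \subset long_pairs #|X| <-> f = 0.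
Proof.
split=> [sf | ->]; last by apply/subsetP => p; rewrite supportE ffunE eqxx.
by apply/ffunP => p; rewrite ffunE (supportN0 sf) // long_pairs_card.
Qed.

Lemma Espan_support m f : Espan m f <-> support f \subset long_pairs m.
Proof.
split.
  apply: inspan_support => _ [x [y [xy my ->]]].
  by apply: support_eunit; rewrite inE /= xy my.
by apply: support_inspan => x y; rewrite inE => /andP[xy my]; exists x, y.
Qed.

Lemma J1_support f : J1 f <-> support f \subset long_pairs 1.
Proof.
split; first by apply: inspan_support => _ [g [h [_ [_ ->]]]]; exact: support_icomm.
apply: support_inspan => x y; rewrite long_pairs1 => xy.
exists (e x x), (e x y); split; first exact: inI_eunit.
split; first exact: inI_eunit (ltW xy).
by rewrite icomm_eunit ?lexx ?(ltW xy) ?lt_eqF.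
Qed.

Lemma Jlie_support m f : (0 < m)%N -> Jlie m f <-> support f \subset long_pairs m.
Proof.
case: m => // m _; elim: m f => [|m IH] f; first exact: J1_support.
split.
  apply: inspan_support => _ [g [h [/J1_support sg [/IH sh ->]]]].
  apply: support_sub; first by rewrite -add1n; exact: support_imul.
  by rewrite -addn1; exact: support_imul.
apply: support_inspan => x z; rewrite inE => /andP[_ /ilen_split[y [xy yz my]]].
exists (e x y), (e y z).
split; first by apply/J1_support/support_eunit; rewrite long_pairs1.
split; first by apply/IH/support_eunit; rewrite inE /= yz.
by rewrite icomm_eunit ?(ltW xy) // lt_eqF // (lt_le_trans xy yz).
Qed.

Lemma Jrad_support f : Jrad f <-> support f \subset long_pairs 1.
Proof.
split=> [[fI fdiag] | sf].
  apply/subsetP => -[x y]; rewrite supportE long_pairs1; apply: contraR.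
  by rewrite lt_def negb_and negbK => /orP[/eqP-> | /fI->]; rewrite ?fdiag.
split=> [x y nxy | x]; apply: (supportN0 sf); rewrite long_pairs1 ?ltxx //.
by apply: contra nxy => /ltW.
Qed.

Lemma Jpow_support m f : (0 < m)%N -> Jpow m f <-> support f \subset long_pairs m.
Proof.
case: m => // m _; elim: m f => [|m IH] f; first exact: Jrad_support.
split.
  apply: inspan_support => _ [g [h [/Jrad_support sg [/IH sh ->]]]].
  by rewrite -add1n; exact: support_imul.
apply: support_inspan => x z; rewrite inE => /andP[_ /ilen_split[y [xy yz my]]].
exists (e x y), (e y z).
split; first by apply/Jrad_support/support_eunit; rewrite long_pairs1.
split; first by apply/IH/support_eunit; rewrite inE /= yz.
by rewrite imul_eunit // ltW.
Qed.

End IncidenceSupport.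

Theorem proposition2p4 (d : Order.disp_t) (X : finPOrderType d) (K : fieldType) :
  connected_poset X ->
  (forall m : nat, (0 < m)%N ->
     (forall f : {ffun X * X -> K}, Jlie m f <-> Espan m f) /\
     (forall f : {ffun X * X -> K}, Jpow m f <-> Espan m f)) /\
  ((0 < #|X|)%N ->
     (forall f : {ffun X * X -> K}, Jlie #|X| f <-> f = 0) /\
     (forall f : {ffun X * X -> K}, Jpow #|X| f <-> f = 0)) /\
  (forall m : nat, (0 < m)%N ->
     (forall f g : {ffun X * X -> K}, inI f -> Jlie m g ->
        Jlie m (imul f g) /\ Jlie m (imul g f) /\ Jlie m (icomm f g))).
Proof.
move=> _; split; [|split].
- move=> m m0; split=> f.
    exact: iff_trans (Jlie_support f m0) (iff_sym (Espan_support m f)).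
  exact: iff_trans (Jpow_support f m0) (iff_sym (Espan_support m f)).
- move=> X0; split=> f.
    exact: iff_trans (Jlie_support f X0) (support_long_card f).
  exact: iff_trans (Jpow_support f X0) (support_long_card f).
- move=> m m0 f g /inI_support sf /(Jlie_support _ m0) sg.
  have sfg : support (imul f g) \subset long_pairs m := support_imul sf sg.
  have sgf : support (imul g f) \subset long_pairs m.
    by rewrite -[m]addn0; exact: support_imul.
  by split; [|split]; apply/(Jlie_support _ m0) => //; exact: support_sub.
Qed.
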